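(* For every integer $n\geq 9$ with $n\equiv 2 \pmod 7$, there exists a simple plane graph $G$ on $n$ vertices containing neither $K_4$ nor $C_5$ as a subgraph such that $e(G)=\frac{15}{7}(n-2)$.
   Context: $K_4$ is the complete graph on $4$ vertices, $C_5$ the cycle on $5$ vertices; $e(G)$ is the number of edges of $G$. *)

From HB Require Import structures.
From mathcomp Require Import all_boot all_order all_algebra.
From mathcomp Require Import all_classical all_reals topology normedtype.
Set Implicit Arguments. Unset Strict Implicit. Unset Printing Implicit Defensive.
Import Order.TTheory GRing.Theory Num.Theory.
Import numFieldNormedType.Exports.

Definition simple_graph (n : nat) (e : rel 'I_n) : Prop :=
  (forall u, ~~ e u u) /\ (forall u v, e u v = e v u).

Definition nedges (n : nat) (e : rel 'I_n) : nat :=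
  #|[set p : 'I_n * 'I_n | (p.1 < p.2)%N && e p.1 p.2]|.

Definition has_K4 (n : nat) (e : rel 'I_n) : Prop :=
  exists f : 'I_4 -> 'I_n, injective f /\ (forall i j, i != j -> e (f i) (f j)).

Definition has_C5 (n : nat) (e : rel 'I_n) : Prop :=
  exists f : 'I_5 -> 'I_n, injective f /\
    (forall i : 'I_5, e (f i) (f (ordS i))).

Local Open Scope ring_scope.

Definition unit_interval (R : realType) (t : R) : Prop := 0 <= t <= 1.
Definition open_unit_interval (R : realType) (t : R) : Prop := 0 < t < 1.

Definition plane_embedding (R : realType) (n : nat) (e : rel 'I_n)
    (pos : 'I_n -> R * R) (arc : 'I_n -> 'I_n -> R -> R * R) : Prop :=
  injective pos /\
  (forall u v : 'I_n, (u < v)%N -> e u v ->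
     [/\ {within [set t | unit_interval t], continuous (arc u v)}%classic,
         (forall t s, unit_interval t -> unit_interval s ->
            arc u v t = arc u v s -> t = s),
         arc u v 0 = pos u,
         arc u v 1 = pos v &
         (forall t w, open_unit_interval t -> arc u v t <> pos w)]) /\
  (forall u v u' v' : 'I_n, (u < v)%N -> e u v -> (u' < v')%N -> e u' v' ->
     (u, v) <> (u', v') ->
     forall t s, open_unit_interval t -> open_unit_interval s ->
       arc u v t <> arc u' v' s).

Definition planar (R : realType) (n : nat) (e : rel 'I_n) : Prop :=
  exists pos arc, @plane_embedding R n e pos arc.

From HB Require Import structures.
From mathcomp Require Import all_boot all_order all_algebra.
From mathcomp Require Import all_classical all_reals topology normedtype.
From mathcomp Require Import ring lra zify.
Set Implicit Arguments. Unset Strict Implicit. Unset Printing Implicit Defensive.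

(* Let H be the 9-vertex graph [gadget] below, with terminals 0 and 8: it has
   15 edges, contains no K4 and no C5, and its terminals are non-adjacent with
   no common neighbour.  For n = 7k + 2, glue k copies of H along their
   terminals.  Two copies meet only in the two hubs, which are at distance 3 in
   every copy, so a 5-cycle or a K4 cannot leave a single copy, where it would
   be a C5 or K4 of H.  Planarity: H has a two-page book embedding with the
   terminals at the ends of the spine, the edges at 0 on the upper page and
   those at 8 on the lower page; laying the copies side by side between the
   hubs gives a two-page book embedding of the glued graph, and a two-page
   book embedding is drawn in the plane with half-parabolas over the spine. *)

(* A two-page book embedding: the vertices lie on the spine in the order of
   'I_n, and [page u v] (for u < v) is the page carrying the edge uv. *)
Definition book2 (n : nat) (e page : rel 'I_n) : Prop :=
  forall u u' v v' : 'I_n, u < u' < v -> v < v' -> e u v -> e u' v' ->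
    page u v != page u' v'.

Section ParabolicArcs.
Import Order.TTheory GRing.Theory Num.Theory numFieldNormedType.Exports.
Local Open Scope ring_scope.
Variable R : realType.

Definition parabola_arc (a b s : R) (t : R) : R * R :=
  (a + t * (b - a), s * (t * (1 - t) * (b - a) ^+ 2)).

Definition chord_arc (u v : nat) (upper : bool) : R -> R * R :=
  parabola_arc u%:R v%:R (if upper then 1 else -1).

Lemma parabola_arc_continuous (a b s : R) : continuous (parabola_arc a b s).
Proof.
move=> t; apply: (@cvg_pair _ _ _ _ (nbhs (a + t * (b - a)))
  (nbhs (s * (t * (1 - t) * (b - a) ^+ 2)))).
- by apply: cvgD; [exact: cvg_cst | apply: cvgM; [exact: cvg_id | exact: cvg_cst]].
- apply: cvgM; first exact: cvg_cst.
  apply: cvgM; last exact: cvg_cst.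
  by apply: cvgM; [exact: cvg_id | apply: cvgB; [exact: cvg_cst | exact: cvg_id]].
Qed.

Lemma parabola_height_gt0 (a b t : R) : a < b -> 0 < t < 1 ->
  0 < t * (1 - t) * (b - a) ^+ 2.
Proof.
move=> ab /andP[t0 t1].
by apply: mulr_gt0; [apply: mulr_gt0; lra | apply: exprn_gt0; lra].
Qed.

(* Over the abscissa x the arc on the chord [a, b] has height (x - a) (b - x). *)
Lemma nested_parabolas_disjoint (a b a' b' t s : R) :
  a < b -> a' < b' -> 0 < t < 1 -> 0 < s < 1 ->
  a <= a' -> b' <= b -> (a < a') || (b' < b) ->
  a + t * (b - a) = a' + s * (b' - a') ->
  t * (1 - t) * (b - a) ^+ 2 != s * (1 - s) * (b' - a') ^+ 2.
Proof.
move=> ab ab' /andP[t0 t1] /andP[s0 s1] aa' bb' strict ex.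
set x := a + t * (b - a) in ex.
have -> : t * (1 - t) * (b - a) ^+ 2 = (x - a) * (b - x) by rewrite /x; ring.
have -> : s * (1 - s) * (b' - a') ^+ 2 = (x - a') * (b' - x) by rewrite ex; ring.
have xa' : a' < x by rewrite ex; nra.
have xb' : x < b' by rewrite ex; nra.
apply/eqP; case/orP: strict => ?; nra.
Qed.

Lemma chord_arcs_disjoint (u v u' v' : nat) (p p' : bool) (t s : R) :
  (u < v)%N -> (u' < v')%N -> (u, v) <> (u', v') ->
  ((u < u' < v)%N -> (v < v')%N -> p != p') ->
  ((u' < u < v')%N -> (v' < v)%N -> p' != p) ->
  0 < t < 1 -> 0 < s < 1 -> chord_arc u v p t <> chord_arc u' v' p' s.
Proof.
move=> uv u'v' neq cross cross' ht hs [ex ey].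
have ab : u%:R < v%:R :> R by rewrite ltr_nat.
have ab' : u'%:R < v'%:R :> R by rewrite ltr_nat.
have h_gt0 := parabola_height_gt0 ab ht; have h'_gt0 := parabola_height_gt0 ab' hs.
have same_page : p = p' by move: ey; case: (p); case: (p') => //; lra.
have same_height : t * (1 - t) * (v%:R - u%:R) ^+ 2 = s * (1 - s) * (v'%:R - u'%:R) ^+ 2 :> R.
  by move: ey; rewrite same_page; case: (p'); lra.
have [uv' u'v] : (u < v')%N /\ (u' < v)%N.
  by rewrite -!(ltr_nat R); case/andP: ht; case/andP: hs; split; nra.
have nested : (u <= u')%N -> (v' <= v)%N -> (u < u')%N || (v' < v)%N -> False.
  move=> uu' vv' strict; move/eqP: same_height; apply/negP.
  by apply: nested_parabolas_disjoint; rewrite ?ler_nat ?ltr_nat.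
have nested' : (u' <= u)%N -> (v <= v')%N -> (u' < u)%N || (v < v')%N -> False.
  move=> u'u v'v strict; move/eqP: (esym same_height); apply/negP.
  by apply: nested_parabolas_disjoint; rewrite ?ler_nat ?ltr_nat.
case: (ltngtP u u') => [lt_uu'|lt_u'u|eq_uu']; case: (ltngtP v v') => [lt_vv'|lt_v'v|eq_vv'].
- by move/eqP: same_page; apply/negP/cross => //; apply/andP.
- by apply: nested; rewrite ?(ltnW lt_uu') ?(ltnW lt_v'v) ?lt_uu'.
- by apply: nested; rewrite ?(ltnW lt_uu') ?eq_vv' ?lt_uu'.
- by apply: nested'; rewrite ?(ltnW lt_u'u) ?(ltnW lt_vv') ?lt_u'u.
- by move/eqP: (esym same_page); apply/negP/cross' => //; apply/andP.
- by apply: nested'; rewrite ?(ltnW lt_u'u) ?eq_vv' ?lt_u'u.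
- by apply: nested'; rewrite ?(ltnW lt_vv') ?eq_uu' ?lt_vv' ?orbT.
- by apply: nested; rewrite ?(ltnW lt_v'v) ?eq_uu' ?lt_v'v ?orbT.
- by apply: neq; rewrite eq_uu' eq_vv'.
Qed.

Lemma book2_planar (n : nat) (e page : rel 'I_n) : book2 e page -> planar R e.
Proof.
move=> noncrossing.
exists (fun v => ((v : nat)%:R, 0)), (fun u v : 'I_n => chord_arc u v (page u v)).
split; [|split].
- by move=> u v [] /eqP; rewrite eqr_nat => /eqP /val_inj.
- move=> u v uv _; have ab : (u : nat)%:R < (v : nat)%:R :> R by rewrite ltr_nat.
  split.
  + exact/continuous_subspaceT/parabola_arc_continuous.
  + move=> t s _ _ [/addrI ts _].
    by apply: (mulIf _ ts); rewrite subr_eq0 gt_eqF.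
  + by rewrite /chord_arc /parabola_arc; congr pair; ring.
  + by rewrite /chord_arc /parabola_arc; congr pair; ring.
  + move=> t w ht [_] /eqP; apply/negP.
    by case: (page u v); rewrite ?mul1r ?mulN1r ?oppr_eq0 gt_eqF ?parabola_height_gt0.
- move=> u v u' v' uv euv u'v' eu'v' neq t s ht hs; apply: chord_arcs_disjoint ht hs => //.
  + by case=> /val_inj eq_uu' /val_inj eq_vv'; apply: neq; rewrite eq_uu' eq_vv'.
  + by move=> uu'v vv'; apply: noncrossing.
  + by move=> u'uv' v'v; apply: noncrossing.
Qed.

End ParabolicArcs.

Lemma ordS5_cases (i j : 'I_5) :
  [|| j == i, j == ordS i, j == ordS (ordS i), i == ordS (ordS j) | i == ordS j].
Proof. by case: i j => [[|[|[|[|[|i]]]]] ?] [[|[|[|[|[|j]]]]] ?]. Qed.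

Lemma ordS5K (i : 'I_5) : ordS (ordS (ordS (ordS (ordS i)))) = i.
Proof. by apply/val_inj; case: i => [[|[|[|[|[|i]]]]] ?]. Qed.

Lemma ordS2_neq (i : 'I_5) : ordS (ordS i) != i.
Proof. by case: i => [[|[|[|[|[|i]]]]] ?]. Qed.

(* Vertices 0 and (k * m).+1 are the hubs, and vertex j * m + i, for 0 < i <= m,
   is vertex i of the j-th copy of [gadget], whose terminals ord0 and ord_max
   are identified with the hubs. *)
Section Gluing.
Variables (m k : nat) (gadget : rel 'I_m.+2).
Hypothesis m_gt0 : 0 < m.
Local Notation n := (k * m).+2.

Definition terminal (i : 'I_m.+2) : bool := (i == ord0) || (i == ord_max).

Definition hub (v : 'I_n) : bool := (v == 0 :> nat) || (v == (k * m).+1 :> nat).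

Definition block (v : 'I_n) : nat := v.-1 %/ m.

Definition loc (v : 'I_n) : 'I_m.+2 :=
  inord (if v == 0 :> nat then 0 else if v == (k * m).+1 :> nat then m.+1
         else (v.-1 %% m).+1).

Definition same_block (u v : 'I_n) : bool := [|| hub u, hub v | block u == block v].

Definition glue : rel 'I_n := fun u v => same_block u v && gadget (loc u) (loc v).

Lemma loc_inner (v : 'I_n) : ~~ hub v ->
  [/\ (v : nat) = block v * m + loc v, 0 < loc v <= m & block v < k].
Proof.
rewrite /hub /loc /block negb_or => /andP[v0 vn]; rewrite (negbTE v0) (negbTE vn).
have lt_v := ltn_ord v; have := ltn_pmod v.-1 m_gt0.
rewrite inordK; last lia.
have := divn_eq v.-1 m; rewrite ltn_divLR //.
move: (v.-1 %/ m) (v.-1 %% m) => q r ? ?; split; lia.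
Qed.

Lemma loc0 (v : 'I_n) : (v : nat) = 0 -> loc v = ord0.
Proof. by move=> v0; apply/val_inj; rewrite /loc v0 /= inordK. Qed.

Lemma locN (v : 'I_n) : (v : nat) = (k * m).+1 -> loc v = ord_max.
Proof. by move=> vN; apply/val_inj; rewrite /loc vN /= eqxx inordK. Qed.

Lemma hub_terminal (v : 'I_n) : hub v = terminal (loc v).
Proof.
apply/idP/idP.
- by case/orP=> /eqP v_eq; rewrite ?(loc0 v_eq) ?(locN v_eq) /terminal eqxx ?orbT.
- apply: contraLR => /loc_inner[_ /andP[? ?] _].
  by rewrite /terminal negb_or -!val_eqE /=; lia.
Qed.

Lemma leq_block (u v : 'I_n) : u <= v -> block u <= block v.
Proof. by move=> uv; apply: leq_div2r; lia. Qed.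

Lemma ltn_loc (u v : 'I_n) : same_block u v -> (loc u < loc v) = (u < v).
Proof.
have [lt_u lt_v] := (ltn_ord u, ltn_ord v).
have [hu|nhu] := boolP (hub u); have [hv|nhv] := boolP (hub v).
- case/orP: hu => /eqP u_eq; case/orP: hv => /eqP v_eq;
    by rewrite ?(loc0 u_eq) ?(locN u_eq) ?(loc0 v_eq) ?(locN v_eq) u_eq v_eq /=; lia.
- have [_ /andP[? ?] _] := loc_inner nhv; move: nhv; rewrite /hub.
  by case/orP: hu => /eqP u_eq; rewrite ?(loc0 u_eq) ?(locN u_eq) u_eq /=; lia.
- have [_ /andP[? ?] _] := loc_inner nhu; move: nhu; rewrite /hub.
  by case/orP: hv => /eqP v_eq; rewrite ?(loc0 v_eq) ?(locN v_eq) v_eq /=; lia.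
rewrite /same_block (negbTE nhu) (negbTE nhv) => /eqP same.
have [-> _ _] := loc_inner nhu; have [-> _ _] := loc_inner nhv.
by rewrite same; lia.
Qed.

Lemma same_blockC (u v : 'I_n) : same_block u v = same_block v u.
Proof. by rewrite /same_block orbCA eq_sym. Qed.

Lemma same_block_refl (u : 'I_n) : same_block u u.
Proof. by rewrite /same_block eqxx !orbT. Qed.

Lemma same_block_inner (u v : 'I_n) : ~~ hub u -> ~~ hub v ->
  same_block u v = (block u == block v).
Proof. by rewrite /same_block => /negbTE-> /negbTE->. Qed.

Lemma same_block_trans (u v w : 'I_n) : ~~ hub v ->
  same_block u v -> same_block v w -> same_block u w.
Proof.
rewrite /same_block => /negbTE->; case: (hub u); case: (hub w) => //=.
by move=> /eqP-> /eqP->.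
Qed.

Lemma same_block_loc_inj (u v : 'I_n) : same_block u v -> loc u = loc v -> u = v.
Proof.
move=> same loc_eq; have same' : same_block v u by rewrite same_blockC.
apply/val_inj/eqP; rewrite eqn_leq leqNgt [X in _ && X]leqNgt.
by rewrite -(ltn_loc same) -(ltn_loc same') loc_eq ltnn.
Qed.

Lemma glue_simple : simple_graph gadget -> simple_graph glue.
Proof.
case=> irr sym; split=> [u | u v]; first by rewrite /glue (negbTE (irr _)) andbF.
by rewrite /glue same_blockC sym.
Qed.

Lemma loc_injective (p : nat) (f : 'I_p -> 'I_n) : injective f ->
  (forall i j, same_block (f i) (f j)) -> injective (loc \o f).
Proof. by move=> f_inj same i j /(same_block_loc_inj (same i j))/f_inj. Qed.

Lemma glue_K4 : has_K4 glue -> has_K4 gadget.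
Proof.
case=> f [f_inj f_adj]; exists (loc \o f); split=> [|i j /f_adj/andP[] //].
apply: (loc_injective f_inj) => i j; have [->|/f_adj/andP[] //] := eqVneq i j.
exact: same_block_refl.
Qed.

Section BookEmbedding.
Variable page : rel 'I_m.+2.
Hypothesis gadget_book2 : book2 gadget page.
(* An edge at the left hub and an edge at the right hub coming from two
   different copies always interleave. *)
Hypothesis terminal_pages :
  forall x y, gadget ord0 x -> gadget y ord_max -> page ord0 x != page y ord_max.

Lemma glue_book2 : book2 glue (fun u v => page (loc u) (loc v)).
Proof.
move=> u u' v v' /andP[uu' u'v] vv' /andP[s_uv e_uv] /andP[s_u'v' e_u'v'].
have lt_v' := ltn_ord v'.
have [nhu' nhv] : ~~ hub u' /\ ~~ hub v by rewrite /hub; split; lia.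
have [/andP[hu hv']|] := boolP (hub u && hub v').
  have u0 : (u : nat) = 0 by move: hu; rewrite /hub; lia.
  have v'N : (v' : nat) = (k * m).+1 by move: hv'; rewrite /hub; lia.
  by rewrite (loc0 u0) (locN v'N) in e_uv e_u'v' *; apply: terminal_pages.
rewrite negb_and => nh.
have s_u'v : same_block u' v.
  rewrite same_block_inner // eqn_leq (leq_block (ltnW u'v)) /=.
  case/orP: nh => [nhu | nhv'].
  - by move: s_uv; rewrite same_block_inner // => /eqP <-; apply/leq_block/ltnW.
  - by move: s_u'v'; rewrite same_block_inner // => /eqP ->; apply/leq_block/ltnW.
have s_vu' : same_block v u' by rewrite same_blockC.
have s_uu' := same_block_trans nhv s_uv s_vu'.
have s_vv' := same_block_trans nhu' s_vu' s_u'v'.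
apply: gadget_book2 e_uv e_u'v'; last by rewrite (ltn_loc s_vv').
by rewrite (ltn_loc s_uu') (ltn_loc s_u'v) uu'.
Qed.

End BookEmbedding.

Hypothesis gadget_simple : simple_graph gadget.
Hypothesis terminals_far : forall x, gadget ord0 x -> ~~ gadget x ord_max.

Lemma glue_hubs_far (a b c : 'I_n) : hub a -> hub c -> glue a b -> glue b c -> a = c.
Proof.
move=> ha hc /andP[_ ab] /andP[_ bc].
apply: same_block_loc_inj; first by rewrite /same_block ha.
move: ha hc; rewrite !hub_terminal /terminal.
case/orP=> /eqP a0; case/orP=> /eqP c0; rewrite a0 c0 // in ab bc *.
- by move/terminals_far/negP: ab.
- by move: bc; rewrite gadget_simple.2 => /terminals_far/negP; rewrite gadget_simple.2.
Qed.

Section FiveCycle.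
Variable f : 'I_5 -> 'I_n.
Hypotheses (f_inj : injective f) (f_cycle : forall i, glue (f i) (f (ordS i))).

Lemma cycle5_hubs_apart (i : 'I_5) : hub (f i) -> hub (f (ordS (ordS i))) -> False.
Proof.
move=> hi hi2; have /f_inj := glue_hubs_far hi hi2 (f_cycle i) (f_cycle (ordS i)).
by move/eqP; rewrite eq_sym (negbTE (ordS2_neq i)).
Qed.

Lemma cycle5_same_block2 (i : 'I_5) : same_block (f i) (f (ordS (ordS i))).
Proof.
have edge j : same_block (f j) (f (ordS j)) by case/andP: (f_cycle j).
have [hi1|nhi1] := boolP (hub (f (ordS i))); last exact: same_block_trans nhi1 (edge _) (edge _).
have nhi3 : ~~ hub (f (ordS (ordS (ordS i)))) by apply/negP/cycle5_hubs_apart.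
have nhi4 : ~~ hub (f (ordS (ordS (ordS (ordS i))))).
  by apply/negP => hi4; apply: (cycle5_hubs_apart hi4); rewrite ordS5K.
rewrite same_blockC; apply: same_block_trans nhi4 _ _; last by rewrite -{2}(ordS5K i).
exact: same_block_trans nhi3 (edge _) (edge _).
Qed.

Lemma cycle5_same_block (i j : 'I_5) : same_block (f i) (f j).
Proof.
have edge j' : same_block (f j') (f (ordS j')) by case/andP: (f_cycle j').
case/orP: (ordS5_cases i j) => [/eqP-> | /or4P[] /eqP->]; rewrite ?same_block_refl ?edge ?cycle5_same_block2 //.
by rewrite same_blockC cycle5_same_block2.
by rewrite same_blockC edge.
Qed.

End FiveCycle.

Lemma glue_C5 : has_C5 glue -> has_C5 gadget.
Proof.
case=> f [f_inj f_cycle]; exists (loc \o f); split=> [|i]; last by case/andP: (f_cycle i).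
exact/loc_injective/cycle5_same_block.
Qed.

Definition lift (j : 'I_k) (i : 'I_m.+2) : 'I_n :=
  inord (if i == ord0 then 0 else if i == ord_max then (k * m).+1 else j * m + i).

Lemma lift_inner (j : 'I_k) (i : 'I_m.+2) : ~~ terminal i ->
  [/\ (lift j i : nat) = j * m + i, 0 < i <= m & j * m + i <= k * m].
Proof.
rewrite /terminal negb_or -!val_eqE /= => /andP[i0 im]; have := ltn_ord i.
have : j.+1 * m <= k * m by rewrite leq_mul2r ltn_ord orbT.
rewrite /lift -!val_eqE /= (negbTE i0) (negbTE im) mulSn => jk ltm.
by rewrite inordK; [split; lia | lia].
Qed.

Lemma loc_lift (j : 'I_k) (i : 'I_m.+2) : loc (lift j i) = i.
Proof.
have [/orP[]/eqP->|/(lift_inner j)[lift_eq /andP[i0 im] lift_le]] := boolP (terminal i).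
- by rewrite loc0 // /lift /= inordK.
- by rewrite locN // /lift /= !eqxx inordK.
apply/val_inj; rewrite /loc lift_eq /= !ifN ?inordK; try lia.
have -> : (j * m + i).-1 = j * m + i.-1 by lia.
by rewrite modnMDl modn_small; lia.
Qed.

Lemma block_lift (j : 'I_k) (i : 'I_m.+2) : ~~ terminal i -> block (lift j i) = j.
Proof.
case/(lift_inner j)=> lift_eq /andP[i0 im] _.
rewrite /block (_ : (lift j i).-1 = j * m + i.-1); last by lia.
by rewrite divnMDl // divn_small ?addn0 //; lia.
Qed.

Lemma same_block_lift (j : 'I_k) (a b : 'I_m.+2) : same_block (lift j a) (lift j b).
Proof.
rewrite /same_block !hub_terminal !loc_lift.
have [//|/block_lift->] := boolP (terminal a); have [//|/block_lift->] := boolP (terminal b).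
by rewrite eqxx !orbT.
Qed.

Lemma lift_loc (j : 'I_k) (v : 'I_n) : hub v || (block v == j) -> lift j (loc v) = v.
Proof.
move=> hv_or; apply: same_block_loc_inj; last exact: loc_lift.
have [hv|nhv] := boolP (hub v); first by rewrite same_blockC /same_block hv.
rewrite same_block_inner ?hub_terminal ?loc_lift -?hub_terminal // block_lift -?hub_terminal //.
by rewrite (negbTE nhv) eq_sym in hv_or.
Qed.

Lemma exists_lift_loc (u v : 'I_n) : ~~ hub u -> same_block u v ->
  exists j : 'I_k, lift j (loc u) = u /\ lift j (loc v) = v.
Proof.
move=> nhu s_uv; have [_ _ lt_block] := loc_inner nhu.
exists (Ordinal lt_block); split; apply: lift_loc; first by rewrite eqxx orbT.
by move: s_uv; rewrite /same_block (negbTE nhu) eq_sym.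
Qed.

Hypothesis terminals_nonadjacent : ~~ gadget ord0 ord_max.

Lemma gadget_terminals (a b : 'I_m.+2) : gadget a b -> terminal a -> terminal b -> False.
Proof.
move=> e_ab /orP[]/eqP a_eq /orP[]/eqP b_eq; move: e_ab; rewrite a_eq b_eq.
- by rewrite (negbTE (gadget_simple.1 _)).
- exact/negP.
- by rewrite gadget_simple.2; apply/negP.
- by rewrite (negbTE (gadget_simple.1 _)).
Qed.

Lemma nedges_glue : nedges glue = k * nedges gadget.
Proof.
pose lift2 (x : 'I_k * ('I_m.+2 * 'I_m.+2)) := (lift x.1 x.2.1, lift x.1 x.2.2).
rewrite /nedges; set E := [set q | _ & gadget q.1 q.2].
have -> : k * #|E| = #|finset.setX [set: 'I_k] E| by rewrite cardsX cardsT card_ord.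
rewrite -(card_in_imset (f := lift2)).
  apply: eq_card => -[u v]; rewrite inE /=; apply/idP/imsetP.
  - case/andP=> uv /andP[s_uv e_uv].
    have [j [lu lv]] : exists j : 'I_k, lift j (loc u) = u /\ lift j (loc v) = v.
      have [hu|nhu] := boolP (hub u); last exact: exists_lift_loc.
      have nhv : ~~ hub v.
        by apply/negP; rewrite !hub_terminal in hu *; exact: gadget_terminals e_uv hu.
      have s_vu : same_block v u by rewrite same_blockC.
      by have [j [? ?]] := exists_lift_loc nhv s_vu; exists j.
    exists (j, (loc u, loc v)); last by rewrite /lift2 /= lu lv.
    by rewrite !inE /= (ltn_loc s_uv) uv.
  - case=> -[j [a b]]; rewrite !inE /= => /andP[ab e_ab] [-> ->].
    by rewrite -ltn_loc ?same_block_lift // /glue same_block_lift !loc_lift ab.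
case=> [j [a b]] [j' [a' b']]; rewrite !inE /= => /andP[_ e_ab] _ [l_a l_b].
have [aa' bb'] : a = a' /\ b = b'.
  by split; [rewrite -(loc_lift j a) l_a | rewrite -(loc_lift j b) l_b]; rewrite loc_lift.
subst a' b'.
congr (_, _); apply: ord_inj.
have [ta|nta] := boolP (terminal a); last by rewrite -(block_lift j nta) l_a block_lift.
have [tb|ntb] := boolP (terminal b); last by rewrite -(block_lift j ntb) l_b block_lift.
by case: (gadget_terminals e_ab ta tb).
Qed.

End Gluing.

Lemma nedgesE (n : nat) (e : rel 'I_n) :
  nedges e = \sum_(u < n) \sum_(v < n) ((u < v) && e u v).
Proof.
rewrite pair_bigA /nedges -sum1_card big_mkcond /=.
by apply: eq_bigr => p _; rewrite inE; case: ((p.1 < p.2) && e p.1 p.2).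
Qed.

Lemma all_iota_ord (p : nat) (P : pred nat) : all P (iota 0 p) -> forall i : 'I_p, P i.
Proof. by move=> /allP all_P i; apply: all_P; rewrite mem_iota add0n ltn_ord. Qed.

Definition gadget_edges : seq (nat * nat) :=
  [:: (0,1); (0,2); (0,3); (0,7); (1,2); (1,4); (2,4); (3,6); (3,7); (4,5);
      (4,8); (5,6); (5,8); (6,7); (6,8)].

Definition gadget_adj (i j : nat) : bool :=
  ((i, j) \in gadget_edges) || ((j, i) \in gadget_edges).

Definition gadget_up (i j : nat) : bool :=
  (i, j) \notin [:: (1,4); (2,4); (4,8); (5,8); (6,8)].

Definition gadget : rel 'I_9 := fun i j => gadget_adj i j.
Definition gadget_page : rel 'I_9 := fun i j => gadget_up i j.

Local Notation I9 := (iota 0 9).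

Lemma gadget_simple : simple_graph gadget.
Proof.
split=> [|i j]; last by rewrite /gadget /gadget_adj orbC.
by apply: (all_iota_ord (P := fun i => ~~ gadget_adj i i)); vm_compute.
Qed.

Lemma gadget_terminals_nonadjacent : ~~ gadget ord0 ord_max.
Proof. by []. Qed.

Lemma gadget_terminals_far x : gadget ord0 x -> ~~ gadget x ord_max.
Proof.
have check : all (fun x => gadget_adj 0 x ==> ~~ gadget_adj x 8) I9 by vm_compute.
by move: check => /all_iota_ord/(_ x) /implyP.
Qed.

Lemma gadget_nedges : nedges gadget = 15.
Proof.
rewrite nedgesE -(big_mkord xpredT (fun i => \sum_(j < 9) ((i < j) && gadget_adj i j))).
under eq_bigr => i _ do rewrite -(big_mkord xpredT (fun j => ((i < j) && gadget_adj i j : nat))).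
by rewrite unlock; vm_compute.
Qed.

Lemma gadget_K4_free : ~ has_K4 gadget.
Proof.
have check : all (fun a => all (fun b => gadget_adj a b ==> all (fun c =>
    gadget_adj a c ==> gadget_adj b c ==> all (fun d =>
    gadget_adj a d ==> gadget_adj b d ==> gadget_adj c d ==> ~~ uniq [:: a; b; c; d])
    I9) I9) I9) I9 by vm_compute.
case=> f [f_inj f_adj].
pose o0 := @Ordinal 4 0 isT; pose o1 := @Ordinal 4 1 isT.
pose o2 := @Ordinal 4 2 isT; pose o3 := @Ordinal 4 3 isT.
have := map_inj_uniq (inj_comp val_inj f_inj) [:: o0; o1; o2; o3].
move: check => /all_iota_ord/(_ (f o0)) /all_iota_ord/(_ (f o1)) /implyP/(_ (f_adj o0 o1 isT)).
move=> /all_iota_ord/(_ (f o2)) /implyP/(_ (f_adj o0 o2 isT)) /implyP/(_ (f_adj o1 o2 isT)).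
move=> /all_iota_ord/(_ (f o3)) /implyP/(_ (f_adj o0 o3 isT)) /implyP/(_ (f_adj o1 o3 isT)).
by move=> /implyP/(_ (f_adj o2 o3 isT)) /negbTE ->.
Qed.

Lemma gadget_C5_free : ~ has_C5 gadget.
Proof.
have check : all (fun a => all (fun b => gadget_adj a b ==> all (fun c =>
    gadget_adj b c ==> all (fun d => gadget_adj c d ==> all (fun e =>
    gadget_adj d e ==> gadget_adj e a ==> ~~ uniq [:: a; b; c; d; e])
    I9) I9) I9) I9) I9 by vm_compute.
case=> f [f_inj f_cycle].
pose o0 := @Ordinal 5 0 isT.
have := map_inj_uniq (inj_comp val_inj f_inj)
  [:: o0; ordS o0; ordS (ordS o0); ordS (ordS (ordS o0)); ordS (ordS (ordS (ordS o0)))].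
have last_edge := f_cycle (ordS (ordS (ordS (ordS o0)))); rewrite ordS5K in last_edge.
move: check => /all_iota_ord/(_ (f o0)) /all_iota_ord/(_ (f (ordS o0))).
move=> /implyP/(_ (f_cycle _)) /all_iota_ord/(_ (f (ordS (ordS o0)))) /implyP/(_ (f_cycle _)).
move=> /all_iota_ord/(_ (f (ordS (ordS (ordS o0))))) /implyP/(_ (f_cycle _)).
move=> /all_iota_ord/(_ (f (ordS (ordS (ordS (ordS o0)))))) /implyP/(_ (f_cycle _)).
by move=> /implyP/(_ last_edge) /negbTE ->.
Qed.

Lemma gadget_book2 : book2 gadget gadget_page.
Proof.
have check : all (fun u => all (fun u' => all (fun v => all (fun v' =>
    (u < u' < v) ==> (v < v') ==> gadget_adj u v ==> gadget_adj u' v' ==>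
    (gadget_up u v != gadget_up u' v')) I9) I9) I9) I9 by vm_compute.
move=> u u' v v' uu'v vv' e_uv e_u'v'.
move: check => /all_iota_ord/(_ u) /all_iota_ord/(_ u') /all_iota_ord/(_ v) /all_iota_ord/(_ v').
by move=> /implyP/(_ uu'v) /implyP/(_ vv') /implyP/(_ e_uv) /implyP/(_ e_u'v').
Qed.

Lemma gadget_terminal_pages x y :
  gadget ord0 x -> gadget y ord_max -> gadget_page ord0 x != gadget_page y ord_max.
Proof.
have check : all (fun x => all (fun y => gadget_adj 0 x ==> gadget_adj y 8 ==>
    (gadget_up 0 x != gadget_up y 8)) I9) I9 by vm_compute.
move=> e_0x e_y8; move: check => /all_iota_ord/(_ x) /all_iota_ord/(_ y).
by move=> /implyP/(_ e_0x) /implyP/(_ e_y8).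
Qed.

Theorem theorem2 (R : realType) (n : nat) :
  (9 <= n)%N -> n %% 7 = 2 ->
  exists e : rel 'I_n,
    [/\ simple_graph e, planar R e, ~ has_K4 e, ~ has_C5 e &
        7 * nedges e = 15 * (n - 2)].
Proof.
move=> _ n_mod7.
have n_eq : n = (n %/ 7 * 7).+2 by rewrite {1}(divn_eq n 7) n_mod7 addn2.
move: (n %/ 7) n_eq => k n_eq; clear n_mod7; subst n.
have m_gt0 : (0 < 7)%N by [].
exists (glue (k := k) gadget); split.
- exact: glue_simple gadget_simple.
- exact/book2_planar/(glue_book2 m_gt0 gadget_book2 gadget_terminal_pages).
- by move/(glue_K4 m_gt0)/gadget_K4_free.
- by move/(glue_C5 m_gt0 gadget_simple gadget_terminals_far)/gadget_C5_free.
- rewrite (nedges_glue k m_gt0 gadget_simple gadget_terminals_nonadjacent) gadget_nedges; lia.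
Qed.
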